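(* Let $R$ be a commutative ring with unit and let $M\subset\mathbb{M}_R$ be a $\Rightarrow_R$-connected subset. Then for any nonempty subset $M'\subset M$ the homomorphism $\rho^R_{M,M'}\colon R[q]^M\to R[q]^{M'}$ is injective.
   Context: $q$ is an indeterminate. $\mathbb{M}_R$ is the set of monic polynomials in $R[q]$. For $M\subset\mathbb{M}_R$, $M^*$ is the multiplicative set generated by $M$, directed by divisibility, and $R[q]^M=\varprojlim_{f\in M^*}R[q]/(f)$; for $M'\subset M$, $\rho^R_{M,M'}$ is induced by the identity of $R[q]$. For $f,g\in\mathbb{M}_R$ write $f\Rightarrow_R g$ if there exist an ideal $I\subset R$ with $\bigcap_{j\ge0}I^j=(0)$ and $m\ge0$ with $f^m\in(g)+I[q]$. $M$ is $\Rightarrow_R$-connected if $M$ is nonempty and for all $f,f'\in M$ there is a sequence $f=f_0\Rightarrow_R f_1\Rightarrow_R\cdots\Rightarrow_R f_r=f'$ ($r\ge0$) in $M$. *)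

From mathcomp Require Import all_boot all_order all_algebra.
Set Implicit Arguments. Unset Strict Implicit. Unset Printing Implicit Defensive.
Import GRing.Theory.
Local Open Scope ring_scope.

Section Defs.
Variable R : comNzRingType.

Definition pdvd (f g : {poly R}) : Prop := exists h : {poly R}, g = h * f.

Definition pcong (f a b : {poly R}) : Prop := exists h : {poly R}, a - b = h * f.

Definition is_ideal (I : R -> Prop) : Prop :=
  [/\ I 0, (forall a b, I a -> I b -> I (a + b)) & (forall r a, I a -> I (r * a))].

Definition in_ideal_pow (I : R -> Prop) (j : nat) (x : R) : Prop :=
  exists (n : nat) (r : 'I_n -> R) (a : 'I_n -> 'I_j -> R),
    (forall i k, I (a i k)) /\ x = \sum_(i < n) r i * \prod_(k < j) a i k.

Definition in_ideal_poly (I : R -> Prop) (p : {poly R}) : Prop :=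
  forall i : nat, I p`_i.

Definition implR (f g : {poly R}) : Prop :=
  exists (I : R -> Prop) (m : nat),
    [/\ is_ideal I,
        (forall x, (forall j, in_ideal_pow I j x) -> x = 0) &
        exists (h p : {poly R}), in_ideal_poly I p /\ f ^+ m = h * g + p].

Inductive implR_chain (M : {poly R} -> Prop) : {poly R} -> {poly R} -> Prop :=
  | chain_refl f : M f -> implR_chain M f f
  | chain_step f g h : M f -> implR f g -> implR_chain M g h -> implR_chain M f h.

Definition implR_connected (M : {poly R} -> Prop) : Prop :=
  (exists f, M f) /\ forall f f', M f -> M f' -> implR_chain M f f'.

Definition mult_closure (M : {poly R} -> Prop) (f : {poly R}) : Prop :=
  exists s : seq {poly R}, (forall p, p \in s -> M p) /\ f = \prod_(p <- s) p.

(* An element of R[q]^M = lim_{f in M^*} R[q]/(f), represented by a family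
   of representatives x f of the classes in R[q]/(f), compatible with the
   transition maps R[q]/(g) -> R[q]/(f) for f | g. *)
Definition proj_lim_elt (M : {poly R} -> Prop) (x : {poly R} -> {poly R}) : Prop :=
  forall f g, mult_closure M f -> mult_closure M g -> pdvd f g -> pcong f (x g) (x f).

Definition proj_lim_eq (M : {poly R} -> Prop) (x y : {poly R} -> {poly R}) : Prop :=
  forall f, mult_closure M f -> pcong f (x f) (y f).

End Defs.

(** Write [z = x - y]; it is a compatible family, and we must show that [F]
    divides [z F] for every [F] in [M^*], knowing it for the powers of some
    [f0] in [M']. This property propagates along [f =>_R g]: if [f^m] lies in
    [(g) + I[q]], then some power of [f] lies in [(g^k) + I^J[q]] for all
    [k], [J], and compatibility of [z] shows that the remainder of [z H]
    modulo the monic [H = g^k G] has all its coefficients in [I^J] for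
    every [J], hence vanishes because [I] is separated. Following a chain
    from [f0] to each factor of an element of [M^*] concludes. *)

From mathcomp Require Import all_boot all_order all_algebra.
From mathcomp Require Import ring.
Set Implicit Arguments. Unset Strict Implicit. Unset Printing Implicit Defensive.
Import GRing.Theory Pdiv.Ring Pdiv.RingMonic.
Local Open Scope ring_scope.

Section IdealPowers.
Variable R : comNzRingType.
Implicit Types (I K : R -> Prop) (p q u : {poly R}).

Lemma ideal_sum K n (F : 'I_n -> R) :
  is_ideal K -> (forall i, K (F i)) -> K (\sum_(i < n) F i).
Proof. by move=> [K0 KD _] KF; elim/big_ind: _. Qed.

Lemma in_ideal_pow0 I j : in_ideal_pow I j 0.
Proof.
exists 0%N, (fun _ => 0), (fun _ _ => 0); split; first by case.
by rewrite big_ord0.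
Qed.

Lemma in_ideal_pow_0 I x : in_ideal_pow I 0 x.
Proof.
exists 1%N, (fun _ => x), (fun _ _ => 0); split; first by move=> ? [].
by rewrite big_ord1 big_ord0 mulr1.
Qed.

Lemma in_ideal_powD I j a b :
  in_ideal_pow I j a -> in_ideal_pow I j b -> in_ideal_pow I j (a + b).
Proof.
move=> [n1 [r1 [a1 [Ia1 ->]]]] [n2 [r2 [a2 [Ia2 ->]]]].
pose glue T (u : 'I_n1 -> T) (v : 'I_n2 -> T) i :=
  match split i with inl i1 => u i1 | inr i2 => v i2 end.
exists (n1 + n2)%N, (glue _ r1 r2), (glue _ a1 a2); split.
  by move=> i k; rewrite /glue; case: (split i).
rewrite big_split_ord /glue; congr (_ + _); apply: eq_bigr => i _.
  by rewrite (unsplitK (inl _ i)).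
by rewrite (unsplitK (inr _ i)).
Qed.

Lemma in_ideal_powMl I j r a : in_ideal_pow I j a -> in_ideal_pow I j (r * a).
Proof.
move=> [n [r1 [a1 [Ia1 ->]]]]; exists n, (fun i => r * r1 i), a1; split => //.
by rewrite mulr_sumr; apply: eq_bigr => i _; rewrite mulrA.
Qed.

Lemma in_ideal_pow_is_ideal I j : is_ideal (in_ideal_pow I j).
Proof. by split; [exact: in_ideal_pow0 | exact: in_ideal_powD | exact: in_ideal_powMl]. Qed.

Lemma in_ideal_powSr I j x a :
  in_ideal_pow I j x -> I a -> in_ideal_pow I j.+1 (x * a).
Proof.
move=> [n [r1 [a1 [Ia1 ->]]]] Ia.
exists n, r1, (fun i k => if unlift ord0 k is Some k' then a1 i k' else a); split.
  by move=> i k; case: (unlift ord0 k).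
rewrite mulr_suml; apply: eq_bigr => i _.
rewrite big_ord_recl unlift_none.
under [X in _ = _ * (_ * X)]eq_bigr => k _ do rewrite liftK.
by rewrite [a * _]mulrC mulrA.
Qed.

Lemma in_ideal_polyD K p q :
  is_ideal K -> in_ideal_poly K p -> in_ideal_poly K q -> in_ideal_poly K (p + q).
Proof. by move=> [_ KD _] Kp Kq i; rewrite coefD; apply: KD. Qed.

Lemma in_ideal_poly_mul K1 K2 K3 p q : is_ideal K3 ->
  (forall a b, K1 a -> K2 b -> K3 (a * b)) ->
  in_ideal_poly K1 p -> in_ideal_poly K2 q -> in_ideal_poly K3 (p * q).
Proof. by move=> K3id KM Kp Kq i; rewrite coefM; apply: ideal_sum => // j; apply: KM. Qed.

Lemma in_ideal_polyMl K u p :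
  is_ideal K -> in_ideal_poly K p -> in_ideal_poly K (u * p).
Proof.
move=> Kid Kp i; rewrite coefM; apply: ideal_sum => // j.
by case: Kid => _ _; apply.
Qed.

Lemma in_ideal_polyMr K u p :
  is_ideal K -> in_ideal_poly K p -> in_ideal_poly K (p * u).
Proof. by rewrite mulrC; apply: in_ideal_polyMl. Qed.

Lemma in_ideal_poly_rmodp K p d : d \is monic ->
  is_ideal K -> in_ideal_poly K p -> in_ideal_poly K (rmodp p d).
Proof.
move=> mond Kid Kp i.
rewrite -[p]coefK poly_def (rmodp_sum mond) coef_sum.
apply: ideal_sum => // j; rewrite (rmodpZ mond) coefZ mulrC.
by case: Kid => _ _; apply.
Qed.

(** For monic [d], [R[q]/(d)] is a free [R]-module, so it inherits the
    separatedness of the [I]-adic filtration from [R]. *)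
Lemma pdvd_of_ideal_pow_approx I d p : d \is monic -> is_ideal I ->
  (forall x, (forall j, in_ideal_pow I j x) -> x = 0) ->
  (forall j, exists2 u, pcong d p u & in_ideal_poly (in_ideal_pow I j) u) ->
  pdvd d p.
Proof.
move=> mond Iid Isep approx.
suff mod0 : rmodp p d = 0 by exists (rdivp p d); rewrite {1}(rdivp_eq mond p) mod0 addr0.
apply/polyP => i; rewrite coef0; apply: Isep => j.
have [u [w puw] Ju] := approx j.
have -> : p = w * d + u by rewrite -puw; ring.
rewrite (rmodpD mond) (rmodp_mull mond) add0r.
by apply: in_ideal_poly_rmodp => //; apply: in_ideal_pow_is_ideal.
Qed.

Definition in_radical_mod K g f :=
  exists (N : nat) (v r : {poly R}), f ^+ N = v * g + r /\ in_ideal_poly K r.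

Lemma in_radical_mod_ideal_pow I g f : is_ideal I ->
  in_radical_mod I g f -> forall j, in_radical_mod (in_ideal_pow I j) g f.
Proof.
move=> Iid [m [h [p [fm Ip]]]]; elim=> [|j [N [v [r [fN Jr]]]]].
  by exists 0%N, 0, 1; split; [rewrite expr0 mul0r add0r | move=> i; apply: in_ideal_pow_0].
exists (N + m)%N, (v * (h * g + p) + r * h), (r * p); split.
  by rewrite exprD fN fm; ring.
apply: (@in_ideal_poly_mul (in_ideal_pow I j) I) => //.
  exact: in_ideal_pow_is_ideal.
exact: in_ideal_powSr.
Qed.

Lemma in_radical_mod_exp K g f : is_ideal K ->
  in_radical_mod K g f -> forall k, in_radical_mod K (g ^+ k) f.
Proof.
move=> Kid [n [w [s [fn Ks]]]]; elim=> [|k [N [v [r [fN Kr]]]]].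
  exists 0%N, 1, 0; split; first by rewrite !expr0 mulr1 addr0.
  by move=> i; rewrite coef0; case: Kid.
exists (N + n)%N, (v * w), (v * g ^+ k * s + r * w * g + r * s); split.
  by rewrite exprD fN fn exprSr; ring.
apply: in_ideal_polyD => //; first apply: in_ideal_polyD => //.
- exact: in_ideal_polyMl.
- by rewrite -mulrA; apply: in_ideal_polyMr.
- exact: in_ideal_polyMr.
Qed.

End IdealPowers.

Section MultClosure.
Variables (R : comNzRingType) (M : {poly R} -> Prop).

Lemma mult_closureM f g :
  mult_closure M f -> mult_closure M g -> mult_closure M (f * g).
Proof.
move=> [s1 [Ms1 ->]] [s2 [Ms2 ->]]; exists (s1 ++ s2); split; last by rewrite big_cat.
by move=> p; rewrite mem_cat => /orP [/Ms1|/Ms2].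
Qed.

Lemma mult_closureX f n : M f -> mult_closure M (f ^+ n).
Proof.
move=> Mf; exists (nseq n f); split; first by move=> p /nseqP [-> _].
by rewrite big_nseq; elim: n => [|n IHn]; rewrite ?expr0 // exprS IHn.
Qed.

Lemma mult_closure_monic f :
  (forall g, M g -> g \is monic) -> mult_closure M f -> f \is monic.
Proof. by move=> Mmon [s [Ms ->]]; rewrite big_seq; apply: monic_prod => p /Ms/Mmon. Qed.

End MultClosure.

Lemma proj_lim_eltB (R : comNzRingType) (M : {poly R} -> Prop) x y :
  proj_lim_elt M x -> proj_lim_elt M y -> proj_lim_elt M (fun f => x f - y f).
Proof.
move=> cx cy f g Mf Mg fg.
have [[u xgf] [v ygf]] := (cx f g Mf Mg fg, cy f g Mf Mg fg).
by exists (u - v); rewrite mulrBl -xgf -ygf; ring.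
Qed.

Section Vanishing.
Variables (R : comNzRingType) (M : {poly R} -> Prop).
Hypothesis M_monic : forall f, M f -> f \is monic.
Variable z : {poly R} -> {poly R}.
Hypothesis z_compat : proj_lim_elt M z.
Implicit Types (f g F G : {poly R}).

Lemma pdvd_compat F F' : mult_closure M F -> mult_closure M F' ->
  pdvd F F' -> pdvd F (z F) -> pdvd F (z F').
Proof.
move=> MF MF' FF' [c zF]; have [d zFF'] := z_compat MF MF' FF'.
by exists (d + c); rewrite mulrDl -zFF' -zF; ring.
Qed.

Lemma implR_vanishing f g G : M f -> M g -> implR f g -> mult_closure M G ->
  (forall a, pdvd (f ^+ a * G) (z (f ^+ a * G))) ->
  forall k, pdvd (g ^+ k * G) (z (g ^+ k * G)).
Proof.
move=> Mf Mg [I [m [Iid Isep [h [p [Ip fm]]]]]] MG vanish k.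
set H := g ^+ k * G.
have MH : mult_closure M H by apply: mult_closureM => //; apply: mult_closureX.
apply: pdvd_of_ideal_pow_approx (Isep) _ => //.
  exact: mult_closure_monic MH.
move=> j.
have frad : in_radical_mod I g f by exists m, h, p.
have [N [v [r [fN Jr]]]] :=
  in_radical_mod_exp (in_ideal_pow_is_ideal I j) (in_radical_mod_ideal_pow Iid frad j) k.
have MfG : mult_closure M (f ^+ N * G) by apply: mult_closureM => //; apply: mult_closureX.
have MfH : mult_closure M (f ^+ N * H) by apply: mult_closureM => //; apply: mult_closureX.
have [c zfH] : pdvd (f ^+ N * G) (z (f ^+ N * H)).
  by apply: pdvd_compat (vanish N) => //; exists (g ^+ k); rewrite /H; ring.
have [d zHfH] : pcong H (z (f ^+ N * H)) (z H).
  by apply: z_compat => //; exists (f ^+ N); rewrite mulrC.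
exists (c * G * r); last by apply: in_ideal_polyMl => //; apply: in_ideal_pow_is_ideal.
exists (c * v - d); have -> : z H = z (f ^+ N * H) - d * H by rewrite -zHfH; ring.
by rewrite zfH fN /H; ring.
Qed.

Lemma implR_chain_vanishing f f' : implR_chain M f f' ->
  forall G, mult_closure M G -> (forall a, pdvd (f ^+ a * G) (z (f ^+ a * G))) ->
  forall k, pdvd (f' ^+ k * G) (z (f' ^+ k * G)).
Proof.
elim=> // {}f g f'' Mf fg gf'' IH G MG vanish; apply: IH => //.
by apply: implR_vanishing vanish => //; case: gf''.
Qed.

Lemma connected_vanishing f0 : implR_connected M -> M f0 ->
  (forall a, pdvd (f0 ^+ a) (z (f0 ^+ a))) ->
  forall F, mult_closure M F -> pdvd F (z F).
Proof.
move=> [_ Mconn] Mf0 vanish0 F [s [Ms ->]].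
suff vanish a t : (forall p, p \in t -> M p) ->
    pdvd (f0 ^+ a * \prod_(p <- t) p) (z (f0 ^+ a * \prod_(p <- t) p)).
  by have := vanish 0%N s Ms; rewrite expr0 mul1r.
elim: t a => [|g t IHt] a Mt; first by rewrite big_nil mulr1.
have Mt' p : p \in t -> M p by move=> pt; apply: Mt; rewrite inE pt orbT.
have MG : mult_closure M (f0 ^+ a * \prod_(p <- t) p).
  by apply: mult_closureM; [apply: mult_closureX | exists t].
have := implR_chain_vanishing (Mconn _ _ Mf0 (Mt _ (mem_head g t))) MG _ 1.
rewrite expr1 big_cons mulrCA; apply=> b.
by rewrite mulrA -exprD; apply: IHt.
Qed.

End Vanishing.

Theorem corollary3p5 (R : comNzRingType) (M M' : {poly R} -> Prop) :
  (forall f, M f -> f \is monic) ->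
  implR_connected M ->
  (forall f, M' f -> M f) ->
  (exists f, M' f) ->
  forall x y : {poly R} -> {poly R},
    proj_lim_elt M x -> proj_lim_elt M y ->
    proj_lim_eq M' x y -> proj_lim_eq M x y.
Proof.
move=> Mmon Mconn M'M [f0 M'f0] x y cx cy xy'.
apply: (connected_vanishing Mmon (proj_lim_eltB cx cy) Mconn (M'M _ M'f0)) => a.
exact: (xy' _ (mult_closureX a M'f0)).
Qed.
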